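(* Let $\alpha,\beta>0$ and $\tau>0$ with $\tau^\alpha<1$. If $A\in\mathcal B(X)$ is a bounded operator on a Banach space $X$ with $\|A\|<1$, then for each $n\in\mathbb N_0$ the series $\sum_{j=0}^\infty k_\tau^{\alpha j+\beta}(n)A^j$ converges in operator norm, and $A$ generates the discrete $(\alpha,\beta)$-resolvent family $\{S_{\alpha,\beta}^n\}_{n\in\mathbb{N}_0}$ given by $$S_{\alpha,\beta}^n=\sum_{j=0}^\infty k_\tau^{\alpha j+\beta}(n)A^j,\qquad n\in\mathbb N_0.$$
   Context: For $\gamma>0$ and $n\in\mathbb{N}_0$ let $k_\tau^\gamma(n):=\frac{\tau^{\gamma-1}\Gamma(\gamma+n)}{\Gamma(\gamma)\Gamma(n+1)}$. For $\alpha,\beta>0$, a sequence $\{S_{\alpha,\beta}^n\}_{n\in\mathbb{N}_0}\subset\mathcal{B}(X)$ is called a discrete $(\alpha,\beta)$-resolvent family generated by the closed operator $A:D(A)\subset X\to X$ if (1) $S^n_{\alpha,\beta}x\in D(A)$ for all $x\in X$, $n\in\mathbb N_0$, and $AS_{\alpha,\beta}^nx=S_{\alpha,\beta}^nAx$ for all $x\in D(A)$, $n\in\mathbb{N}_0$; (2) for every $x\in X$ and $n\in\mathbb{N}_0$, $S_{\alpha,\beta}^nx=k^\beta_\tau(n)x+\tau A\sum_{j=0}^n k^\alpha_\tau(n-j)S_{\alpha,\beta}^jx$. *)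

From HB Require Import structures.
From mathcomp Require Import all_boot all_order all_algebra.
From mathcomp Require Import all_classical all_reals all_analysis.
Set Implicit Arguments. Unset Strict Implicit. Unset Printing Implicit Defensive.
Import Order.TTheory GRing.Theory Num.Theory.
Import numFieldNormedType.Exports.
Local Open Scope classical_set_scope.
Local Open Scope ring_scope.

(* k_tau^gamma(n) = tau^(gamma-1) Gamma(gamma+n) / (Gamma(gamma) Gamma(n+1)),
   written with Gamma(gamma+n)/Gamma(gamma) = gamma (gamma+1) ... (gamma+n-1)
   and Gamma(n+1) = n!. *)
Definition kdisc {R : realType} (tau gamma : R) (n : nat) : R :=
  tau `^ (gamma - 1) * (\prod_(i < n) (gamma + i%:R)) / (n`!)%:R.

Section Ops.
Context {R : realType} {X : normedModType R}.

Definition bounded_op (A : X -> X) : Prop :=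
  (forall (a : R) (x y : X), A (a *: x + y) = a *: A x + A y) /\
  exists C : R, forall x : X, `|A x| <= C * `|x|.

Definition opnorm (A : X -> X) : R :=
  sup [set `|A x| | x in [set x : X | `|x| <= 1]].

Definition oppow (A : X -> X) (j : nat) : X -> X := iter j A.

Definition closed_op (D : set X) (A : X -> X) : Prop :=
  closed [set p : X * X | D p.1 /\ p.2 = A p.1].

(* discrete (alpha,beta)-resolvent family generated by the closed
   operator A : D(A) ⊂ X -> X (values of A outside D are irrelevant) *)
Definition discrete_resolvent (tau alpha beta : R) (D : set X) (A : X -> X)
  (S : nat -> X -> X) : Prop :=
  closed_op D A /\
  (forall n, bounded_op (S n)) /\
  (forall n x, D (S n x)) /\
  (forall n x, D x -> A (S n x) = S n (A x)) /\
  (forall n x, S n x = kdisc tau beta n *: x +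
      tau *: A (\sum_(j < n.+1) kdisc tau alpha (n - j) *: S j x)).
End Ops.

From HB Require Import structures.
From mathcomp Require Import all_boot all_order all_algebra.
From mathcomp Require Import all_classical all_reals all_analysis.
From mathcomp Require Import ring lra.
Set Implicit Arguments. Unset Strict Implicit. Unset Printing Implicit Defensive.
Import Order.TTheory GRing.Theory Num.Theory.
Import numFieldNormedType.Exports.
Local Open Scope classical_set_scope.
Local Open Scope ring_scope.

(* The Chu-Vandermonde
      convolution of the normalized rising factorials (g)_n / n! gives the
      semigroup law  tau (k^a * k^b)(n) = k^(a+b)(n)  (kdisc_conv).  Writing
      k_tau^(alpha j + beta)(n) as (tau^alpha)^j times a polynomial of degree
      n in j, and dominating polynomials by exponentials, the coefficients
      times |A|^j decay geometrically in j (kdisc_geom_le).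
   2. Operators.  Geometric decay gives norm convergence in the Banach space
      X with a geometric tail bound, uniform on the unit ball; hence S^n is
      bounded, the partial sums converge in operator norm, and S^n commutes
      with A.  Applying tau A to the partial sums and using the semigroup law
      reproduces the partial sums shifted by one (res_partial_sums_rec);
      letting N -> oo yields the resolvent equation. *)

Section RisingQuotient.
Variable R : numFieldType.

(* The normalized rising factorial a (a+1) ... (a+n-1) / n!, i.e. the
   generalized binomial coefficient C(a+n-1, n). *)
Definition rising_quot (a : R) (n : nat) : R :=
  (\prod_(i < n) (a + i%:R)) / (n`!)%:R.

Lemma rising_quot0 a : rising_quot a 0 = 1.
Proof. by rewrite /rising_quot big_ord0 fact0 divr1. Qed.

Lemma rising_quotS a n :
  n.+1%:R * rising_quot a n.+1 = (a + n%:R) * rising_quot a n.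
Proof.
rewrite /rising_quot big_ord_recr /= factS natrM.
have fact_neq0 : (n`!)%:R != 0 :> R by rewrite pnatr_eq0 -lt0n fact_gt0.
have Sn_neq0 : n.+1%:R != 0 :> R by rewrite pnatr_eq0.
by field; apply/andP.
Qed.

(* Both sides satisfy the recurrence of
   rising_quotS with parameter a + b and agree at n = 0. *)
Lemma rising_quot_conv a b n :
  \sum_(0 <= m < n.+1) rising_quot a (n - m) * rising_quot b m =
  rising_quot (a + b) n.
Proof.
set V := fun n => \sum_(0 <= m < n.+1) rising_quot a (n - m) * rising_quot b m.
have V_rec k : k.+1%:R * V k.+1 = (a + b + k%:R) * V k.
  rewrite /V mulr_sumr.
  have split_weight m : (m < k.+2)%N -> k.+1%:R * (rising_quot a (k.+1 - m) *
       rising_quot b m) = (k.+1 - m)%:R * rising_quot a (k.+1 - m) *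
       rising_quot b m + m%:R * rising_quot b m * rising_quot a (k.+1 - m).
    move=> hm; have -> : k.+1%:R = (k.+1 - m)%:R + m%:R :> R.
      by rewrite -natrD subnK // -ltnS.
    ring.
  rewrite (eq_big_nat _ _ (fun m hm => split_weight m (andP hm).2)) big_split /=.
  rewrite big_nat_recr //= subnn mul0r mul0r addr0.
  rewrite [X in _ + X]big_nat_recl //= mul0r mul0r add0r.
  rewrite mulr_sumr -big_split /=; apply: eq_big_nat => m /andP[_ hm].
  rewrite subSn // rising_quotS subSS rising_quotS natrB //; ring.
elim: n => [|n IH]; first by rewrite big_nat1 !rising_quot0 mulr1.
have Sn_neq0 : n.+1%:R != 0 :> R by rewrite pnatr_eq0.
by apply: (mulfI Sn_neq0); rewrite -/(V n.+1) V_rec /V IH rising_quotS.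
Qed.

End RisingQuotient.

Section GeometricDecay.
Variable R : realType.

(* Polynomial growth is dominated by any exponential s^j with s > 1; this
   follows from 1 + x^(n+1)/(n+1)! <= e^x at x = (j+1) ln s. *)
Lemma poly_le_exp (s : R) n : 1 < s ->
  exists2 C : R, 0 <= C & forall j : nat, j.+1%:R ^+ n <= C * s ^+ j.
Proof.
move=> s_gt1; set e := ln s; have e_gt0 : 0 < e by exact: ln_gt0.
have s_gt0 : 0 < s by lra.
exists ((n.+1)`!%:R * s / e ^+ n.+1).
  by apply: divr_ge0; [apply: mulr_ge0; [exact: ler0n | exact: ltW] |
                      exact: exprn_ge0 (ltW e_gt0)].
move=> j; have j1_ge1 : 1 <= j.+1%:R :> R by rewrite ler1n.
have exp_bound : (e * j.+1%:R) ^+ n.+1 <= (n.+1)`!%:R * s ^+ j.+1.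
  have := expR_ge1Dxn n (mulr_ge0 (ltW e_gt0) (ler0n R j.+1)).
  rewrite expRM_natr lnK ?posrE // => h.
  rewrite -ler_pdivrMl ?ltr0n ?fact_gt0 // [_^-1 * _]mulrC; lra.
apply: (le_trans (y := j.+1%:R ^+ n.+1)); first by rewrite exprS ler_peMl ?exprn_ege1.
rewrite -(ler_pM2l (exprn_gt0 n.+1 e_gt0)) -exprMn mulrA mulrCA divff ?expf_neq0 ?gt_eqF //.
by rewrite mulr1 -mulrA -exprS.
Qed.

Lemma poly_geom_le n (rho : R) : 0 <= rho -> rho < 1 ->
  exists C r : R, [/\ 0 <= C, 0 < r, r < 1 &
    forall j : nat, j.+1%:R ^+ n * rho ^+ j <= C * r ^+ j].
Proof.
move=> rho_ge0 rho_lt1; set r := (1 + rho) / 2.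
have r_gt0 : 0 < r by rewrite /r; lra.
have r_inv_gt1 : 1 < r^-1 by rewrite invf_gt1 // /r; lra.
have [C C_ge0 hC] := poly_le_exp n r_inv_gt1.
exists C, r; split => // [|j]; first by rewrite /r; lra.
have ratio_le : rho / r <= r by rewrite ler_pdivrMr // /r; nra.
apply: le_trans (ler_wpM2r (exprn_ge0 j rho_ge0) (hC j)) _.
rewrite -mulrA -exprMn [r^-1 * _]mulrC; apply: ler_wpM2l => //.
apply: lerXn2r => //; rewrite nnegrE; [exact: divr_ge0 rho_ge0 (ltW r_gt0) | exact: ltW].
Qed.

End GeometricDecay.

Section Kernel.
Variable R : realType.
Implicit Types tau alpha beta g : R.

Lemma kdiscE tau g n : kdisc tau g n = tau `^ (g - 1) * rising_quot g n.
Proof. by rewrite /kdisc /rising_quot mulrA. Qed.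

Lemma kdisc_ge0 tau g n : 0 <= g -> 0 <= kdisc tau g n.
Proof.
move=> g_ge0; rewrite kdiscE; apply: mulr_ge0; first exact: powR_ge0.
apply: divr_ge0; last exact: ler0n.
by apply: prodr_ge0 => i _; apply: addr_ge0.
Qed.

Lemma kdisc_affine tau alpha beta n j : 0 < tau ->
  kdisc tau (alpha * j%:R + beta) n = tau `^ (beta - 1) / (n`!)%:R *
    (tau `^ alpha) ^+ j * \prod_(i < n) (alpha * j%:R + beta + i%:R).
Proof.
move=> tau_gt0; rewrite /kdisc -addrA (@powRD _ tau (alpha * j%:R)) ?(gt_eqF tau_gt0) ?implybT //.
by rewrite powRrM powR_mulrn ?powR_ge0 //; ring.
Qed.

Lemma prod_affine_le alpha beta n j : 0 <= alpha -> 0 <= beta ->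
  \prod_(i < n) (alpha * j%:R + beta + i%:R) <=
  ((alpha + beta + n%:R) * j.+1%:R) ^+ n.
Proof.
move=> alpha_ge0 beta_ge0; set M := alpha + beta + n%:R.
have -> : (M * j.+1%:R) ^+ n = \prod_(i < n) (M * j.+1%:R).
  by rewrite prodr_const card_ord.
apply: ler_prod => i _.
have hi : i%:R <= n%:R :> R by rewrite ler_nat ltnW.
have hi0 : 0 <= i%:R :> R by exact: ler0n.
have hj : 0 <= j%:R :> R by exact: ler0n.
have alpha_j : 0 <= alpha * j%:R by rewrite mulr_ge0.
rewrite /M -natr1; apply/andP; split; nra.
Qed.

Lemma kdisc_geom_le tau alpha beta (q : R) n : 0 < tau -> 0 < alpha ->
  0 < beta -> tau `^ alpha < 1 -> 0 <= q -> q < 1 ->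
  exists C r : R, [/\ 0 <= C, 0 < r, r < 1 &
    forall j : nat, kdisc tau (alpha * j%:R + beta) n * q ^+ j <= C * r ^+ j].
Proof.
move=> tau_gt0 alpha_gt0 beta_gt0 tau_alpha_lt1 q_ge0 q_lt1.
set rho := tau `^ alpha * q; set M := alpha + beta + n%:R.
set E := tau `^ (beta - 1) / (n`!)%:R.
have rho_ge0 : 0 <= rho by rewrite mulr_ge0 ?powR_ge0.
have rho_lt1 : rho < 1.
  by rewrite /rho; have := powR_ge0 tau alpha; nra.
have M_ge0 : 0 <= M by rewrite /M; have := ler0n R n; lra.
have E_ge0 : 0 <= E by rewrite divr_ge0 ?powR_ge0.
have [C [r [C_ge0 r_gt0 r_lt1 hC]]] := poly_geom_le n rho_ge0 rho_lt1.
exists (E * M ^+ n * C), r; split => // [|j].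
  by apply: mulr_ge0 => //; apply: mulr_ge0 => //; exact: exprn_ge0.
have split_coef : kdisc tau (alpha * j%:R + beta) n * q ^+ j =
    E * (\prod_(i < n) (alpha * j%:R + beta + i%:R) * rho ^+ j).
  by rewrite kdisc_affine // /E /rho exprMn; ring.
rewrite split_coef; clearbody E; rewrite -!mulrA; apply: ler_wpM2l => //.
apply: le_trans (ler_wpM2r (exprn_ge0 j rho_ge0)
  (prod_affine_le n j (ltW alpha_gt0) (ltW beta_gt0))) _.
by rewrite exprMn -mulrA; apply: ler_wpM2l; [exact: exprn_ge0 | exact: hC].
Qed.

(* The semigroup property tau (k^a * k^b)(n) = k^(a+b)(n) of the discrete
   kernels, a consequence of the Chu-Vandermonde convolution. *)
Lemma kdisc_conv tau a b n : 0 < tau ->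
  tau * \sum_(j < n.+1) kdisc tau a (n - j) * kdisc tau b j = kdisc tau (a + b) n.
Proof.
move=> tau_gt0.
have -> : \sum_(j < n.+1) kdisc tau a (n - j) * kdisc tau b j =
    tau `^ (a - 1) * tau `^ (b - 1) *
    \sum_(0 <= j < n.+1) rising_quot a (n - j) * rising_quot b j.
  by rewrite big_mkord mulr_sumr; apply: eq_bigr => j _; rewrite !kdiscE; ring.
rewrite rising_quot_conv kdiscE.
have -> : a + b - 1 = 1 + (a - 1) + (b - 1) by ring.
rewrite !powRD ?powRr1 ?(ltW tau_gt0) ?(gt_eqF tau_gt0) ?implybT //.
ring.
Qed.

End Kernel.

Section BoundedOperators.
Variables (R : realType) (X : normedModType R).
Implicit Types (B : X -> X) (x y : X).

Section Linearity.
Variables (B : X -> X) (hB : bounded_op B).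

Lemma opD x y : B (x + y) = B x + B y.
Proof. by have := hB.1 1 x y; rewrite !scale1r. Qed.

Lemma op0 : B 0 = 0.
Proof. by apply: (addrI (B 0)); rewrite -opD !addr0. Qed.

Lemma opZ a x : B (a *: x) = a *: B x.
Proof. by have := hB.1 a x 0; rewrite !addr0 op0 addr0. Qed.

Lemma opB x y : B (x - y) = B x - B y.
Proof. by rewrite -scaleN1r opD opZ scaleN1r. Qed.

Lemma op_sum I (r : seq I) (P : pred I) (F : I -> X) :
  B (\sum_(i <- r | P i) F i) = \sum_(i <- r | P i) B (F i).
Proof. exact: (big_morph B opD op0). Qed.

End Linearity.

Lemma opnorm_has_ub B (b : R) : (forall x, `|B x| <= b * `|x|) ->
  has_ubound [set `|B x| | x in [set x : X | `|x| <= 1]].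
Proof.
move=> hb; exists `|b| => _ [x x_le1 <-]; apply: le_trans (hb x) _.
apply: le_trans (ler_wpM2r (normr_ge0 x) (ler_norm b)) _.
by rewrite -[X in _ <= X]mulr1; apply: ler_wpM2l.
Qed.

Lemma opnorm_ge B (b : R) : (forall x, `|B x| <= b * `|x|) ->
  forall x, `|x| <= 1 -> `|B x| <= opnorm B.
Proof. by move=> hb x x_le1; apply: (ub_le_sup (opnorm_has_ub hb)); exists x. Qed.

Lemma opnorm_ge0 B (b : R) : (forall x, `|B x| <= b * `|x|) -> 0 <= opnorm B.
Proof.
move=> hb; apply: le_trans (normr_ge0 (B 0)) _.
by apply: (opnorm_ge hb); rewrite normr0.
Qed.

Lemma opnorm_le B (b : R) : 0 <= b -> (forall x, `|B x| <= b * `|x|) ->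
  opnorm B <= b.
Proof.
move=> b_ge0 hb; apply: ge_sup; first by exists `|B 0|, 0 => //=; rewrite normr0.
move=> _ [x x_le1 <-]; apply: le_trans (hb x) _.
by rewrite -[X in _ <= X]mulr1; apply: ler_wpM2l.
Qed.

Lemma opnorm_bound B : bounded_op B -> forall x, `|B x| <= opnorm B * `|x|.
Proof.
move=> hB x; have [_ [C hC]] := hB.
have [->|x_neq0] := eqVneq x 0; first by rewrite op0 // !normr0 mulr0.
have nx_gt0 : 0 < `|x| by rewrite normr_gt0.
have := opnorm_ge hC (x := `|x|^-1 *: x).
rewrite normrZ normfV normr_id mulVf ?normr_eq0 // lexx => /(_ isT).
by rewrite opZ // normrZ normfV normr_id mulrC ler_pdivrMr.
Qed.

Lemma oppow_bound B : bounded_op B ->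
  forall j x, `|oppow B j x| <= opnorm B ^+ j * `|x|.
Proof.
move=> hB; have [_ [C hC]] := hB.
elim=> [|j IH] x; first by rewrite expr0 mul1r.
rewrite /oppow iterS; apply: le_trans (opnorm_bound hB _) _.
by rewrite exprS -mulrA; apply: ler_wpM2l; [exact: opnorm_ge0 hC | exact: IH].
Qed.

Lemma oppow_bounded B : bounded_op B -> forall j, bounded_op (oppow B j).
Proof.
move=> hB; have [_ [D hD]] := hB.
elim=> [|j [IHlin [C IHC]]]; first by split => //; exists 1 => x; rewrite mul1r.
split; first by move=> a x y; rewrite /oppow !iterS -!/(oppow _ _) IHlin; exact: hB.1.
exists (opnorm B * C) => x; rewrite /oppow iterS; apply: le_trans (opnorm_bound hB _) _.
by rewrite -mulrA; apply: ler_wpM2l; [exact: opnorm_ge0 hD | exact: IHC].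
Qed.

Lemma op_continuous B : bounded_op B -> continuous B.
Proof.
move=> hB x; have [_ [C hC]] := hB; have opB_ge0 := opnorm_ge0 hC.
apply/cvgrPdist_le => e e_gt0; have K_gt0 : 0 < opnorm B + 1 by lra.
near=> y; rewrite -opB //; apply: le_trans (opnorm_bound hB _) _.
have hy : `|x - y| <= e / (opnorm B + 1).
  by near: y; exact: (cvgr_dist_le (fun y : X => y) x cvg_id _ (divr_gt0 e_gt0 K_gt0)).
apply: le_trans (ler_wpM2l opB_ge0 hy) _.
by rewrite mulrA ler_pdivrMr //; nra.
Unshelve. all: by end_near.
Qed.

Lemma cvg_op B (f : nat -> X) (l : X) : bounded_op B ->
  f @ \oo --> l -> (fun N => B (f N)) @ \oo --> B l.
Proof. by move=> hB hf; apply: cvg_comp hf _; exact: op_continuous. Qed.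

(* The graph of a continuous map is closed: it is the zero set of the
   continuous map (x, y) |-> y - B x. *)
Lemma continuous_closed_graph B : continuous B -> closed_op [set: X] B.
Proof.
move=> B_cont; rewrite /closed_op.
have -> : [set p : X * X | [set: X] p.1 /\ p.2 = B p.1] =
    (fun p : X * X => p.2 - B p.1) @^-1` [set 0].
  apply/seteqP; split => p /=; first by move=> [_ ->]; rewrite subrr.
  by move/eqP; rewrite subr_eq0 => /eqP ->.
apply: preimage_closed; last exact/accessible_closed_set1/hausdorff_accessible/norm_hausdorff.
move=> p _; apply: (cvgB (f := snd) (g := fun q : X * X => B q.1)); first exact: cvg_snd.
by apply: cvg_comp; [exact: cvg_fst | exact: B_cont].
Qed.

Lemma cvg_sum_ord (F : nat -> nat -> X) (L : nat -> X) k :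
  (forall j, F j @ \oo --> L j) ->
  (fun N => \sum_(j < k) F j N) @ \oo --> \sum_(j < k) L j.
Proof.
move=> hF; elim: k => [|k IH].
  by rewrite big_ord0; under eq_fun do rewrite big_ord0; exact: cvg_cst.
rewrite big_ord_recr; under eq_fun do rewrite big_ord_recr.
exact: cvgD.
Qed.

End BoundedOperators.

Section ResolventSeries.
Variables (R : realType) (X : completeNormedModType R) (tau alpha beta : R).
Variable A : X -> X.
Hypotheses (alpha_gt0 : 0 < alpha) (beta_gt0 : 0 < beta) (tau_gt0 : 0 < tau).
Hypotheses (tau_alpha_lt1 : tau `^ alpha < 1).
Hypotheses (A_bounded : bounded_op A) (A_lt1 : opnorm A < 1).

Definition res_coef (n j : nat) : R := kdisc tau (alpha * j%:R + beta) n.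
Definition res_term (n : nat) (x : X) (j : nat) : X := res_coef n j *: oppow A j x.

Definition resolvent (n : nat) (x : X) : X := lim (series (res_term n x) @ \oo).

Lemma res_coef_ge0 n j : 0 <= res_coef n j.
Proof.
by apply: kdisc_ge0; apply: addr_ge0 (mulr_ge0 (ltW alpha_gt0) (ler0n _ _)) (ltW beta_gt0).
Qed.

Lemma opnorm_A_ge0 : 0 <= opnorm A.
Proof. by have [_ [C hC]] := A_bounded; exact: opnorm_ge0 hC. Qed.

Lemma res_term_geom_le n : exists C r : R, [/\ 0 <= C, 0 < r, r < 1 &
  forall x j, `|res_term n x j| <= C * `|x| * r ^+ j].
Proof.
have [C [r [C_ge0 r_gt0 r_lt1 hC]]] :=
  kdisc_geom_le n tau_gt0 alpha_gt0 beta_gt0 tau_alpha_lt1 opnorm_A_ge0 A_lt1.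
exists C, r; split => // x j.
rewrite normrZ ger0_norm ?res_coef_ge0 //.
apply: le_trans (ler_wpM2l (res_coef_ge0 n j) (oppow_bound A_bounded j x)) _.
by rewrite mulrA [C * _ * _]mulrAC; apply: ler_wpM2r => //; exact: hC.
Qed.

Lemma res_series_cvg n x : series (res_term n x) @ \oo --> resolvent n x.
Proof.
have [C [r [C_ge0 r_gt0 r_lt1 hC]]] := res_term_geom_le n.
apply: normed_cvg; apply: (@series_le_cvg _ _ (geometric (C * `|x|) r)).
- by move=> j; exact: normr_ge0.
- by move=> j; apply: geometric_ge0; [exact: mulr_ge0 | exact: ltW].
- by move=> j /=; exact: hC.
- by apply: is_cvg_geometric_series; rewrite ger0_norm // ltW.
Qed.

Lemma res_tail_le n : exists K r : R, [/\ 0 <= K, 0 < r, r < 1 &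
  forall x N, `|series (res_term n x) N - resolvent n x| <= K * r ^+ N * `|x|].
Proof.
have [C [r [C_ge0 r_gt0 r_lt1 hC]]] := res_term_geom_le n.
have one_minus_r : 0 < 1 - r by lra.
exists (C / (1 - r)), r; split => // [|x N]; first by rewrite divr_ge0 // ltW.
have dist_cvg : (fun M => `|series (res_term n x) N - series (res_term n x) M|)
    @ \oo --> `|series (res_term n x) N - resolvent n x|.
  by apply: cvg_norm; apply: cvgB; [exact: cvg_cst | exact: res_series_cvg].
apply: (ler_cvg_to dist_cvg (cvg_cst (C / (1 - r) * r ^+ N * `|x|))).
near=> M; have N_le_M : (N <= M)%N by near: M; exists N.
rewrite distrC sub_series_geq //; apply: le_trans (ler_norm_sum _ _ _) _.
apply: le_trans (_ : _ <= \sum_(N <= k < M) (C * `|x| * r ^+ k)) _.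
  by apply: ler_sum => k _; exact: hC.
rewrite -mulr_sumr -{1}(subnKC N_le_M) geometric_partial_tail.
have := @geometric_le_lim _ (M - N) (r ^+ N) r (exprn_ge0 N (ltW r_gt0)) r_gt0.
rewrite ger0_norm ?(ltW r_gt0) // => /(_ r_lt1) geom_le.
apply: le_trans (ler_wpM2l _ geom_le) _; first by rewrite mulr_ge0.
by rewrite /=; lra.
Unshelve. all: by end_near.
Qed.

(* S^n is linear (as a limit of linear maps) and bounded by the tail
   estimate at N = 0. *)
Lemma resolvent_bounded n : bounded_op (resolvent n).
Proof.
split.
  move=> a x y; rewrite /resolvent.
  have -> : series (res_term n (a *: x + y)) =
      (fun N => a *: series (res_term n x) N + series (res_term n y) N).
    apply/funext => N; rewrite /series /= scaler_sumr -big_split /=.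
    apply: eq_bigr => k _.
    by rewrite /res_term ((oppow_bounded A_bounded k).1) scalerDr !scalerA mulrC.
  apply: cvg_lim => //; apply: cvgD; last exact: res_series_cvg.
  by apply: cvgZ; [exact: cvg_cst | exact: res_series_cvg].
have [K [r [K_ge0 r_gt0 r_lt1 hK]]] := res_tail_le n.
exists K => x; have := hK x 0%N.
by rewrite /series /= big_geq // sub0r normrN expr0 mulr1.
Qed.

Lemma res_partial_opnorm_cvg n :
  (fun N : nat => opnorm (fun x : X =>
     \sum_(j < N) kdisc tau (alpha * j%:R + beta) n *: oppow A j x
       - resolvent n x)) @ \oo --> (0 : R).
Proof.
have [K [r [K_ge0 r_gt0 r_lt1 hK]]] := res_tail_le n.
have tail_le N x : `|\sum_(j < N) kdisc tau (alpha * j%:R + beta) n *: oppow A j x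
    - resolvent n x| <= K * r ^+ N * `|x|.
  by have := hK x N; rewrite /series /= big_mkord.
have bound_ge0 N : 0 <= K * r ^+ N by apply: mulr_ge0 => //; exact: exprn_ge0 (ltW _).
apply/cvgrPdist_le => e e_gt0.
have := cvg_geometric K (_ : `|r| < 1); rewrite ger0_norm ?ltW // => /(_ r_lt1).
move/cvgrPdist_le/(_ e e_gt0); apply: filterS => N /=.
rewrite !sub0r !normrN => hN.
rewrite ger0_norm; last exact: opnorm_ge0 (tail_le N).
exact: le_trans (opnorm_le (bound_ge0 N) (tail_le N)) (le_trans (ler_norm _) hN).
Qed.

(* S^n commutes with A, since A is continuous and commutes with A^j. *)
Lemma resolvent_comm n x : A (resolvent n x) = resolvent n (A x).
Proof.
have := cvg_op A_bounded (@res_series_cvg n x).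
have -> : (fun N => A (series (res_term n x) N)) = series (res_term n (A x)).
  apply/funext => N; rewrite /series /= op_sum //; apply: eq_bigr => k _.
  by rewrite /res_term opZ // /oppow -iterS -iterSr.
by move=> h; apply/esym/cvg_lim.
Qed.

Lemma res_coef_conv n k :
  tau * \sum_(j < n.+1) kdisc tau alpha (n - j) * res_coef j k = res_coef n k.+1.
Proof. by rewrite /res_coef kdisc_conv // -natr1; congr kdisc; ring. Qed.

(* The resolvent equation holds for partial sums, up to a shift of index:
   tau A applied to the N-th partial sums produces the (N+1)-th one minus
   its j = 0 term. *)
Lemma res_partial_sums_rec n x N :
  series (res_term n x) N.+1 - kdisc tau beta n *: x =
  tau *: A (\sum_(j < n.+1) kdisc tau alpha (n - j) *: series (res_term j x) N).
Proof.
rewrite /series /= big_nat_recl // {1}/res_term /res_coef mulr0 add0r /= addrC addKr.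
rewrite op_sum //.
under [in RHS]eq_bigr => j _ do rewrite (opZ A_bounded) (op_sum A_bounded) scaler_sumr.
rewrite exchange_big scaler_sumr /=; apply: eq_bigr => k _.
rewrite /res_term -res_coef_conv mulr_sumr scaler_suml scaler_sumr.
by apply: eq_bigr => j _; rewrite (opZ A_bounded) !scalerA mulrA.
Qed.

Lemma resolvent_equation n x : resolvent n x = kdisc tau beta n *: x +
  tau *: A (\sum_(j < n.+1) kdisc tau alpha (n - j) *: resolvent j x).
Proof.
set G := fun N => tau *: A (\sum_(j < n.+1)
  kdisc tau alpha (n - j) *: series (res_term j x) N).
have G_to_rhs : G @ \oo --> tau *: A (\sum_(j < n.+1)
    kdisc tau alpha (n - j) *: resolvent j x).
  apply: cvgZ; first exact: cvg_cst.
  apply: cvg_op => //; apply: (cvg_sum_ord (F := fun j N =>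
    kdisc tau alpha (n - j) *: series (res_term j x) N)
    (L := fun j => kdisc tau alpha (n - j) *: resolvent j x)) => j.
  by apply: cvgZ; [exact: cvg_cst | exact: res_series_cvg].
have G_to_lhs : G @ \oo --> resolvent n x - kdisc tau beta n *: x.
  rewrite (_ : G = fun N => series (res_term n x) N.+1 - kdisc tau beta n *: x).
    by apply: cvgB; [rewrite cvg_shiftS; exact: res_series_cvg | exact: cvg_cst].
  by apply/funext => N; rewrite res_partial_sums_rec.
by rewrite -(cvg_unique (@norm_hausdorff _ _) G_to_lhs G_to_rhs) addrC subrK.
Qed.

End ResolventSeries.

Theorem proposition3p12 (R : realType) (X : completeNormedModType R)
  (alpha beta tau : R) (A : X -> X) :
  0 < alpha -> 0 < beta -> 0 < tau -> tau `^ alpha < 1 ->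
  bounded_op A -> opnorm A < 1 ->
  exists S : nat -> X -> X,
    (forall n : nat, bounded_op (S n) /\
       (fun N : nat => opnorm (fun x : X =>
            \sum_(j < N) kdisc tau (alpha * j%:R + beta) n *: oppow A j x - S n x))
         @ \oo --> (0 : R)) /\
    discrete_resolvent tau alpha beta [set: X] A S.
Proof.
move=> alpha_gt0 beta_gt0 tau_gt0 tau_alpha_lt1 A_bounded A_lt1.
exists (resolvent tau alpha beta A); split.
  by move=> n; split; [exact: resolvent_bounded | exact: res_partial_opnorm_cvg].
split; first exact/continuous_closed_graph/op_continuous.
split; first by move=> n; exact: resolvent_bounded.
split; first by [].
split; first by move=> n x _; exact: resolvent_comm.
by move=> n x; exact: resolvent_equation.
Qed.
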